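(* Let $d\ge 3$ be a prime, $\omega=e^{2\pi i/d}$, and $-\frac{1}{d^2-1}\le p\le 1$. Let $\rho_{AB}=p\,|\Psi^+\rangle\langle\Psi^+|+(1-p)\frac{\mathbb{I}}{d^2}$ on $\mathbb{C}^d\otimes\mathbb{C}^d$, where $|\Psi^+\rangle=\frac{1}{\sqrt d}\sum_{i=0}^{d-1}|ii\rangle$. Consider the $d+1$ mutually unbiased bases consisting of the computational basis $\mathcal{Z}=\{|0\rangle,\dots,|d-1\rangle\}$, the Fourier basis $\mathcal{X}=\{\mathcal{F}|0\rangle,\dots,\mathcal{F}|d-1\rangle\}$, and the bases $M_k=\{D^k\mathcal{F}|l\rangle\}_{l=0}^{d-1}$ for $k=1,\dots,d-1$. Then $I(M_k^A:M_k^B)=0$ for every $k=1,\dots,d-1$, and $$I(Z^A:Z^B)=I(X^A:X^B)=2\log(d)+d\Big(\tfrac{p}{d}+\tfrac{1-p}{d^2}\Big)\log\Big(\tfrac{p}{d}+\tfrac{1-p}{d^2}\Big)+(d^2-d)\,\tfrac{1-p}{d^2}\log\Big(\tfrac{1-p}{d^2}\Big).$$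
   Context: Logarithms are base 2, $0\log 0=0$. $\mathcal{F}=\frac{1}{\sqrt d}\sum_{x,y=0}^{d-1}\omega^{xy}|x\rangle\langle y|$ and $D=\mathrm{diag}(\omega^{j^2})_{j=0}^{d-1}$. For a basis $\{|m_j\rangle\}$, $M^A,M^B$ are the outcomes when both parties measure their subsystem in that basis, with joint distribution $p(j,k)=\langle m_j\otimes m_k|\rho_{AB}|m_j\otimes m_k\rangle$, and $I(M^A:M^B)=H(M^A)+H(M^B)-H(M^AM^B)$ is the classical (Shannon) mutual information. *)

From HB Require Import structures.
From mathcomp Require Import all_boot all_order all_algebra.
From mathcomp Require Import complex.
From mathcomp Require Import reals exp trigo.
Set Implicit Arguments. Unset Strict Implicit. Unset Printing Implicit Defensive.
Import Order.TTheory GRing.Theory Num.Theory.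
Local Open Scope ring_scope.
Local Open Scope complex_scope.

Section QDefs.
Variable R : realType.
Variable d : nat.
Local Notation C := (R[i]).

Definition log2 (x : R) : R := ln x / ln 2.
Definition xlogx (x : R) : R := if x == 0 then 0 else x * log2 x.

Definition entropy (T : finType) (P : T -> R) : R := - \sum_(t : T) xlogx (P t).

Definition omega : C := Complex (cos (2 * pi / d%:R)) (sin (2 * pi / d%:R)).

Definition sqrtdC : C := (Num.sqrt (d%:R : R))%:C.

Definition Fourier (x y : 'I_d) : C := sqrtdC^-1 * omega ^+ (x * y).

(* a basis is a family of d vectors in C^d : b j x = <x|b_j> *)
Definition basis_t := 'I_d -> 'I_d -> C.

Definition Zbasis : basis_t := fun j x => (x == j)%:R.
Definition Xbasis : basis_t := fun l x => Fourier x l.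
(* D^k F |l>, D = diag(omega^(j^2)) *)
Definition Mbasis (k : nat) : basis_t := fun l x => omega ^+ (k * (x * x)) * Fourier x l.

Definition psi_plus (xy : 'I_d * 'I_d) : C := sqrtdC^-1 * (xy.1 == xy.2)%:R.

Definition rhoAB (p : R) (xy xy' : 'I_d * 'I_d) : C :=
  p%:C * (psi_plus xy * (psi_plus xy')^*)
  + ((1 - p) / (d%:R ^+ 2))%:C * (xy == xy')%:R.

Definition joint_prob (rho : 'I_d * 'I_d -> 'I_d * 'I_d -> C) (b : basis_t)
    (jk : 'I_d * 'I_d) : R :=
  complex.Re (\sum_(xy : 'I_d * 'I_d) \sum_(xy' : 'I_d * 'I_d)
     (b jk.1 xy.1 * b jk.2 xy.2)^* * rho xy xy' * (b jk.1 xy'.1 * b jk.2 xy'.2)).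

Definition mutual_info (rho : 'I_d * 'I_d -> 'I_d * 'I_d -> C) (b : basis_t) : R :=
  let P := joint_prob rho b in
  entropy (fun j : 'I_d => \sum_(k : 'I_d) P (j, k))
  + entropy (fun k : 'I_d => \sum_(j : 'I_d) P (j, k))
  - entropy P.

End QDefs.

(* Each of the bases yields an outcome distribution of the form
   p(j,k) = a [k = sigma j] + r with sigma a permutation of Z/d, so both marginals
   are uniform and I(M^A:M^B) = 2 log d - H(p) is computed directly.  Writing
   the vectors of the Fourier-type bases as b_l(x) = omega^(f(l,x)) / sqrt d, the
   correlated part of p(j,k) is |sum_x omega^(-(f(j,x) + f(k,x)))|^2.  For the
   Fourier basis (f = x l) orthogonality of characters gives d^2 [j + k = 0].  For
   D^k F the phase is the quadratic k x^2 + l x, and a quadratic Gauss sum with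
   nonzero leading coefficient (d an odd prime) has squared modulus d, so the
   distribution is uniform and the mutual information vanishes. *)

From mathcomp Require Import all_boot all_order all_algebra.
From mathcomp Require Import complex.
From mathcomp Require Import reals exp trigo.
From mathcomp Require Import ring.
Set Implicit Arguments. Unset Strict Implicit. Unset Printing Implicit Defensive.
Import Order.TTheory GRing.Theory Num.Theory.
Local Open Scope complex_scope.
Local Open Scope ring_scope.

Section RootOfUnity.
Variables (R : realType) (d : nat).
Local Notation w := (@omega R d).

Lemma omegaX m :
  w ^+ m = Complex (cos (m%:R * (2 * pi / d%:R))) (sin (m%:R * (2 * pi / d%:R))).
Proof.
elim: m => [|m IH]; first by rewrite expr0 mul0r cos0 sin0.
set t := 2 * pi / _ in IH *.
rewrite exprS IH -natr1 mulrDl mul1r cosD sinD.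
by apply/eqP; rewrite eq_complex /=; apply/andP; split; apply/eqP; ring.
Qed.

Lemma mul_conj_omega : w^* * w = 1.
Proof.
apply/eqP; rewrite eq_complex /= mulNr opprK -!expr2 cos2Dsin2 mulrC mulNr addrN.
by rewrite !eqxx.
Qed.

Lemma omegaXd : (0 < d)%N -> w ^+ d = 1.
Proof.
move=> d_gt0; have d_neq0 : (d%:R : R) != 0 by rewrite pnatr_eq0 -lt0n.
by rewrite omegaX mulrCA divff // mulr1 mulrC mulr_natr cos2pi sin2pi.
Qed.

Lemma omegaX_mod m : (0 < d)%N -> w ^+ m = w ^+ (m %% d).
Proof.
by move=> d_gt0; rewrite {1}(divn_eq m d) exprD mulnC exprM omegaXd // expr1n mul1r.
Qed.

Hypothesis d_gt2 : (2 < d)%N.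

Lemma omega_neq1 : w != 1.
Proof.
have d_gt0 : (0 < d%:R :> R) by rewrite ltr0n (ltn_trans _ d_gt2).
apply/negP => /eqP/(congr1 (@complex.Im R)) /= sin_eq0.
suff : 0 < sin (2 * pi / d%:R :> R) by rewrite sin_eq0 ltxx.
apply: sin_gt0_pi; rewrite divr_gt0 ?mulr_gt0 ?pi_gt0 //=.
by rewrite ltr_pdivrMr // mulrC ltr_pM2l ?pi_gt0 ?ltr_nat.
Qed.

Lemma sum_omegaX : \sum_(i < d) w ^+ i = 0.
Proof.
have := subrX1 w d; rewrite omegaXd ?(ltn_trans _ d_gt2) // subrr => /esym/eqP.
by rewrite mulf_eq0 subr_eq0 (negbTE omega_neq1) => /eqP.
Qed.

End RootOfUnity.

Section AdditiveCharacter.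
Context {R : realType} {n : nat}.
Local Notation d := n.+2.
Local Notation w := (@omega R d).

Definition chi (a : 'I_d) : R[i] := w ^+ a.

Lemma chi_nat m : chi m%:R = w ^+ m.
Proof. by rewrite /chi Zp_nat /= [RHS]omegaX_mod. Qed.

Lemma chiD a b : chi (a + b) = chi a * chi b.
Proof. by rewrite /chi /= -omegaX_mod // exprD. Qed.

Lemma chi0 : chi 0 = 1.
Proof. exact: expr0. Qed.

Lemma conj_chi a : (chi a)^* = chi (- a).
Proof.
have chiNK : chi (- a) * chi a = 1 by rewrite -chiD addNr chi0.
have normK : (chi a)^* * chi a = 1.
  by rewrite /chi rmorphXn /= -exprMn mul_conj_omega expr1n.
by rewrite -[LHS]mulr1 -chiNK mulrCA normK mulr1.
Qed.

Hypotheses (d_gt2 : (2 < d)%N) (d_prime : prime d).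

Lemma Zp_unit_prime (a : 'I_d) : a != 0 -> a \is a GRing.unit.
Proof.
move=> a_neq0; have := unitZpE (p := d) a isT; rewrite natr_Zp => ->.
rewrite prime_coprime //.
apply: contra a_neq0 => /dvdn_leq.
have [a_eq0 _|_ /(_ isT)] := posnP a.
  by apply/eqP/val_inj; rewrite /= a_eq0.
by rewrite ltnNge -ltnS ltn_ord.
Qed.

Lemma sum_chiM (a : 'I_d) : \sum_x chi (a * x) = if a == 0 then d%:R else 0.
Proof.
have [->|a_neq0] := eqVneq a 0.
  by under eq_bigr do rewrite mul0r chi0; rewrite sumr_const card_ord.
transitivity (\sum_x chi x).
  by rewrite [RHS](reindex_inj (mulrI (Zp_unit_prime a_neq0))).
exact: sum_omegaX.
Qed.

Lemma two_Zp_neq0 : (2 : 'I_d) != 0.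
Proof. by apply/eqP => /(congr1 val) /=; rewrite !modn_small // (ltn_trans _ d_gt2). Qed.

(* Shifting the summation variable of the conjugate factor by t leaves the
   inner sum linear in y, which vanishes unless 2 c t = 0, i.e. t = 0. *)
Lemma gauss_sum_sqr (c b : 'I_d) : c != 0 ->
  let G := \sum_x chi (c * x ^+ 2 + b * x) in G * G^* = d%:R.
Proof.
move=> c_neq0 G.
have c2_unit : 2 * c \is a GRing.unit by rewrite unitrM !Zp_unit_prime ?two_Zp_neq0.
have shift y t : chi (c * (y + t) ^+ 2 + b * (y + t)) * (chi (c * y ^+ 2 + b * y))^*
    = chi ((2 * c * t) * y) * chi (c * t ^+ 2 + b * t).
  by rewrite conj_chi -!chiD; congr chi; ring.
rewrite /G rmorph_sum big_distrlr /= exchange_big /=.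
under eq_bigr => y _ do rewrite (reindex_inj (addrI y)) /=.
under eq_bigr => y _ do under eq_bigr => t _ do rewrite shift.
rewrite exchange_big /=.
under eq_bigr => t _ do rewrite -mulr_suml sum_chiM.
rewrite (bigD1 0) //= mulr0 eqxx expr0n !mulr0 addr0 chi0 mulr1 big1 ?addr0 //.
by move=> t t_neq0; rewrite (mulrI_eq0 _ (mulrI c2_unit)) (negbTE t_neq0) mul0r.
Qed.

End AdditiveCharacter.

Lemma sumr_delta (S : pzSemiRingType) (T : finType) (x : T) (F : T -> S) :
  \sum_y F y * (x == y)%:R = F x.
Proof.
rewrite (bigD1 x) //= eqxx mulr1 big1 ?addr0 // => y /negbTE.
by rewrite eq_sym => ->; rewrite mulr0.
Qed.

Lemma sum_indicator (R : pzSemiRingType) (T : finType) (x : T) :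
  \sum_y ((y == x)%:R : R) = 1.
Proof. by rewrite (bigD1 x) //= eqxx big1 ?addr0 // => y /negbTE ->. Qed.

Lemma sumr_pair (V : nmodType) (I J : finType) (F : I * J -> V) :
  \sum_p F p = \sum_i \sum_j F (i, j).
Proof. by rewrite pair_bigA; apply: eq_bigr => -[]. Qed.

Lemma conj_realC (R : realType) (x : R) : (x%:C)^* = x%:C.
Proof. by apply: conj_Creal; rewrite complex_real. Qed.

Section JointProbability.
Variables (R : realType) (d : nat).
Local Notation s := (sqrtdC R d)^-1.

Definition sqnorm (v : 'I_d -> R[i]) : R[i] := \sum_x (v x)^* * v x.

Definition psi_amp (b : basis_t R d) (j k : 'I_d) : R[i] :=
  \sum_(xy : 'I_d * 'I_d) (b j xy.1 * b k xy.2)^* * psi_plus R xy.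

Lemma psi_ampE b j k : psi_amp b j k = s * \sum_x (b j x * b k x)^*.
Proof.
rewrite /psi_amp sumr_pair mulr_sumr; apply: eq_bigr => x _ /=.
under eq_bigr do rewrite /psi_plus /= mulrA.
by rewrite sumr_delta mulrC.
Qed.

Lemma joint_probE p b j k :
  joint_prob (rhoAB p) b (j, k) =
  complex.Re (p%:C * (psi_amp b j k * (psi_amp b j k)^*)
      + ((1 - p) / d%:R ^+ 2)%:C * (sqnorm (b j) * sqnorm (b k))).
Proof.
set B := fun xy : 'I_d * 'I_d => b j xy.1 * b k xy.2.
have expand xy xy' : (B xy)^* * rhoAB p xy xy' * B xy' =
    p%:C * (((B xy)^* * psi_plus R xy) * ((B xy')^* * psi_plus R xy')^*)
    + ((1 - p) / d%:R ^+ 2)%:C * ((B xy)^* * B xy') * (xy == xy')%:R.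
  by rewrite /B /rhoAB !rmorphM /= !conjCK; ring.
rewrite /joint_prob; congr complex.Re.
under eq_bigr do under eq_bigr do rewrite expand.
under eq_bigr do rewrite big_split /= sumr_delta.
rewrite big_split /=; congr (_ + _).
  rewrite /psi_amp rmorph_sum big_distrlr mulr_sumr; apply: eq_bigr => xy _.
  by rewrite mulr_sumr.
rewrite -mulr_sumr /sqnorm big_distrlr sumr_pair /=; congr (_ * _).
by apply: eq_bigr => x _; apply: eq_bigr => y _; rewrite /B rmorphM /=; ring.
Qed.

Lemma sqrtdC_inv_conj : s^* = s.
Proof. by apply: conj_Creal; rewrite /sqrtdC -fmorphV complex_real. Qed.

Lemma sqrtdC_inv_sqr : s * s = (d%:R^-1)%:C.
Proof. by rewrite /sqrtdC -fmorphV -rmorphM -expr2 exprVn sqr_sqrtr. Qed.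

Lemma sqrtdC_inv_normM z : (s * z) * (s * z)^* = (d%:R^-1)%:C * (z * z^*).
Proof. by rewrite rmorphM /= sqrtdC_inv_conj mulrACA sqrtdC_inv_sqr. Qed.

Lemma joint_prob_Z p j k :
  joint_prob (rhoAB p) (@Zbasis R d) (j, k)
  = p / d%:R * (k == j)%:R + (1 - p) / d%:R ^+ 2.
Proof.
have conj_nat (e : bool) : (e%:R : R[i])^* = e%:R by rewrite conjC_nat.
have sqnormZ l : sqnorm (@Zbasis R d l) = 1.
  rewrite /sqnorm /Zbasis; under eq_bigr => x _ do rewrite conj_nat (eq_sym x l).
  by rewrite sumr_delta eqxx.
have ampZ : psi_amp (@Zbasis R d) j k = s * ((k == j)%:R : R)%:C.
  rewrite psi_ampE /Zbasis.
  under eq_bigr => x _ do rewrite rmorphM /= !conj_nat (eq_sym x k).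
  by rewrite sumr_delta rmorph_nat.
rewrite joint_probE !sqnormZ ampZ sqrtdC_inv_normM conj_realC mulr1.
rewrite -!rmorphM -rmorphD /=.
by case: (k == j); rewrite ?mulr1 ?mulr0 // mulrA.
Qed.

End JointProbability.

Section PhaseBases.
Variables (R : realType) (n : nat).
Local Notation d := n.+2.
Local Notation s := (sqrtdC R d)^-1.
Local Notation chi := (@chi R n).

Variables (b : basis_t R d) (f : 'I_d -> 'I_d -> 'I_d).
Hypothesis b_phase : forall l x, b l x = s * chi (f l x).

Lemma sqnorm_phase l : sqnorm (b l) = 1.
Proof.
have dC_neq0 : (d%:R : R) != 0 by rewrite pnatr_eq0.
rewrite /sqnorm; under eq_bigr => x _ do
  rewrite b_phase rmorphM /= sqrtdC_inv_conj conj_chi mulrACA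
          -chiD addNr chi0 mulr1.
by rewrite sumr_const card_ord sqrtdC_inv_sqr -rmorphMn /= -mulr_natr mulVf.
Qed.

Lemma psi_amp_phase j k :
  psi_amp b j k = s * (s * (s * \sum_x chi (- (f j x + f k x)))).
Proof.
rewrite psi_ampE; congr (_ * _); rewrite !mulr_sumr; apply: eq_bigr => x _.
rewrite !b_phase rmorphM /= !rmorphM /= sqrtdC_inv_conj !conj_chi opprD chiD.
ring.
Qed.

Lemma joint_prob_phase p t j k :
  let S := \sum_x chi (- (f j x + f k x)) in
  S * S^* = (t * d%:R ^+ 2)%:C ->
  joint_prob (rhoAB p) b (j, k) = p / d%:R * t + (1 - p) / d%:R ^+ 2.
Proof.
move=> S S_norm.
rewrite joint_probE psi_amp_phase !sqrtdC_inv_normM S_norm !sqnorm_phase mulr1.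
by rewrite -!rmorphM -rmorphD /=; field; rewrite -natrD pnatr_eq0.
Qed.

End PhaseBases.

Section MutuallyUnbiasedBases.
Variables (R : realType) (n : nat).
Local Notation d := n.+2.
Local Notation s := (sqrtdC R d)^-1.
Local Notation chi := (@chi R n).
Hypotheses (d_gt2 : (2 < d)%N) (d_prime : prime d).

Lemma omegaX_natM (x y : 'I_d) : (@omega R d) ^+ (x * y) = chi (x * y).
Proof. by rewrite -chi_nat natrM !natr_Zp. Qed.

Lemma Xbasis_phase l x : @Xbasis R d l x = s * chi (x * l).
Proof. by rewrite /Xbasis /Fourier omegaX_natM. Qed.

Lemma Mbasis_phase k l x : @Mbasis R d k l x = s * chi (k%:R * x ^+ 2 + x * l).
Proof.
rewrite /Mbasis /Fourier omegaX_natM -chi_nat !natrM !natr_Zp.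
by rewrite chiD expr2 mulrCA.
Qed.

Lemma joint_prob_X p j k :
  joint_prob (rhoAB p) (@Xbasis R d) (j, k)
  = p / d%:R * (k == - j)%:R + (1 - p) / d%:R ^+ 2.
Proof.
apply: (joint_prob_phase Xbasis_phase).
have -> : \sum_x chi (- (x * j + x * k)) = if - (j + k) == 0 then d%:R else 0.
  rewrite -(sum_chiM d_gt2 d_prime); apply: eq_bigr => x _; congr chi; ring.
rewrite oppr_eq0 addrC addr_eq0.
case: (k == - j); last by rewrite !mul0r rmorph0.
by rewrite conjC_nat mul1r rmorphXn /= rmorph_nat.
Qed.

Lemma Zp_nat_neq0 k : (0 < k < d)%N -> (k%:R : 'I_d) != 0.
Proof.
case/andP => k_gt0 k_lt_d; apply: contraTneq k_gt0 => /(congr1 val).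
by rewrite Zp_nat /= modn_small // => ->.
Qed.

Lemma joint_prob_M p k j l : (0 < k < d)%N ->
  joint_prob (rhoAB p) (@Mbasis R d k) (j, l) = (d%:R ^+ 2)^-1.
Proof.
move=> k_range.
have dC_neq0 : (d%:R : R) != 0 by rewrite pnatr_eq0.
have c_unit : (- (2 * k%:R) : 'I_d) \is a GRing.unit.
  by rewrite unitrN unitrM !Zp_unit_prime ?two_Zp_neq0 ?Zp_nat_neq0.
have c_neq0 : - (2 * k%:R) != 0 :> 'I_d.
  by apply: contraTneq c_unit => ->; rewrite unitr0.
rewrite (joint_prob_phase (Mbasis_phase k) p (t := d%:R^-1)).
  by field; rewrite -natrD pnatr_eq0.
have -> : \sum_x chi (- (k%:R * x ^+ 2 + x * j + (k%:R * x ^+ 2 + x * l)))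
   = \sum_x chi (- (2 * k%:R) * x ^+ 2 + - (j + l) * x).
  by apply: eq_bigr => x _; congr chi; ring.
by rewrite (gauss_sum_sqr d_gt2 d_prime) // expr2 mulKf // rmorph_nat.
Qed.

End MutuallyUnbiasedBases.

Lemma xlogxE (R : realType) (x : R) : xlogx x = x * log2 x.
Proof. by rewrite /xlogx; case: eqP => [->|]; rewrite ?mul0r. Qed.

Lemma log2V (R : realType) (x : R) : 0 < x -> log2 x^-1 = - log2 x.
Proof. by move=> x_gt0; rewrite /log2 lnV ?mulNr. Qed.

Lemma log2X (R : realType) (x : R) n : 0 < x -> log2 (x ^+ n) = n%:R * log2 x.
Proof. by move=> x_gt0; rewrite /log2 lnXn // -[ln x *+ n]mulr_natl mulrA. Qed.

Section PermutationDistribution.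
Variables (R : realType) (d : nat) (sigma : 'I_d -> 'I_d) (a r : R).
Hypothesis sigma_inj : injective sigma.
Local Notation P j k := (a * (k == sigma j)%:R + r).

Lemma row_sum_perm j : \sum_k P j k = a + d%:R * r.
Proof.
by rewrite big_split /= -mulr_sumr sum_indicator mulr1 sumr_const card_ord mulr_natl.
Qed.

Lemma col_sum_perm k : \sum_j P j k = a + d%:R * r.
Proof.
rewrite big_split /= -mulr_sumr sumr_const card_ord mulr_natl.
suff -> : \sum_j ((k == sigma j)%:R : R) = 1 by rewrite mulr1.
rewrite -[RHS](sum_indicator _ k) [RHS](reindex_inj sigma_inj).
by apply: eq_bigr => j _; rewrite eq_sym.
Qed.

Lemma sum_xlogx_perm :
  \sum_(jk : 'I_d * 'I_d) xlogx (P jk.1 jk.2)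
  = d%:R * xlogx (a + r) + (d%:R ^+ 2 - d%:R) * xlogx r.
Proof.
have xlogx_ind (e : bool) :
    xlogx (a * e%:R + r) = e%:R * (xlogx (a + r) - xlogx r) + xlogx r.
  by case: e; rewrite ?mulr1 ?mul1r ?subrK ?mulr0 ?mul0r ?add0r.
rewrite sumr_pair /=.
under eq_bigr => j _ do under eq_bigr => k _ do rewrite xlogx_ind.
under eq_bigr => j _ do
  rewrite big_split /= -mulr_suml sum_indicator mul1r sumr_const card_ord.
by rewrite sumr_const card_ord; ring.
Qed.

Hypothesis d_gt0 : (0 < d)%N.

Lemma mutual_info_perm (rho : 'I_d * 'I_d -> 'I_d * 'I_d -> R[i]) (b : basis_t R d) :
  (forall j k, joint_prob rho b (j, k) = P j k) ->
  a + d%:R * r = d%:R^-1 ->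
  mutual_info rho b
  = 2 * log2 d%:R + d%:R * xlogx (a + r) + (d%:R ^+ 2 - d%:R) * xlogx r.
Proof.
move=> Pjk marginal; have dR_neq0 : (d%:R : R) != 0 by rewrite pnatr_eq0 -lt0n.
have marginal_entropy (M : 'I_d -> R) : (forall i, M i = d%:R^-1) ->
    entropy M = log2 d%:R.
  move=> ME; rewrite /entropy; under eq_bigr do rewrite ME.
  by rewrite sumr_const card_ord xlogxE log2V ?ltr0n //; field.
rewrite /mutual_info !marginal_entropy => [| k | j].
- rewrite /entropy (eq_bigr (fun jk : 'I_d * 'I_d => xlogx (P jk.1 jk.2))).
    by rewrite sum_xlogx_perm; ring.
  by case=> j k _; rewrite Pjk.
- by under eq_bigr do rewrite Pjk; rewrite col_sum_perm.
- by under eq_bigr do rewrite Pjk; rewrite row_sum_perm.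
Qed.

End PermutationDistribution.

Lemma mutual_info_uniform (R : realType) (d : nat)
    (rho : 'I_d * 'I_d -> 'I_d * 'I_d -> R[i]) (b : basis_t R d) : (0 < d)%N ->
  (forall j k, joint_prob rho b (j, k) = (d%:R ^+ 2)^-1) -> mutual_info rho b = 0.
Proof.
move=> d_gt0 uniform; have dR_neq0 : (d%:R : R) != 0 by rewrite pnatr_eq0 -lt0n.
rewrite (@mutual_info_perm _ _ id 0 (d%:R ^+ 2)^-1 (@inj_id _) d_gt0 rho b).
- by rewrite add0r !xlogxE log2V ?exprn_gt0 ?ltr0n // log2X ?ltr0n //; field.
- by move=> j k; rewrite uniform mul0r add0r.
- by rewrite add0r; field.
Qed.

Local Close Scope complex_scope.

Theorem proposition5 (R : realType) (d : nat) (p : R) :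
  prime d -> (3 <= d)%N ->
  - 1 / ((d%:R : R) ^+ 2 - 1) <= p -> p <= 1 ->
  let rho := @rhoAB R d p in
  let q := p / d%:R + (1 - p) / d%:R ^+ 2 in
  let r := (1 - p) / d%:R ^+ 2 in
  let val := 2 * log2 (d%:R) + d%:R * q * log2 q
             + ((d%:R ^+ 2) - d%:R) * r * log2 r in
  (forall k : nat, (1 <= k <= d - 1)%N -> mutual_info rho (@Mbasis R d k) = 0)
  /\ mutual_info rho (@Zbasis R d) = val
  /\ mutual_info rho (@Xbasis R d) = val.
Proof.
move=> d_prime d_ge3 _ _.
case: d d_prime d_ge3 => [|[|n]] // d_prime d_gt2 rho q r val.
have perm_val b sigma : injective sigma ->
    (forall j k, joint_prob rho b (j, k) = p / n.+2%:R * (k == sigma j)%:R + r) ->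
    mutual_info rho b = val.
  move=> sigma_inj Pjk; rewrite (mutual_info_perm sigma_inj _ Pjk) //.
    by rewrite /val /q -/r !xlogxE; ring.
  by rewrite /r; field; rewrite -natrD pnatr_eq0.
split; [|split].
- move=> k /andP[k_gt0 k_le]; apply: mutual_info_uniform => // j l.
  by apply: joint_prob_M => //; rewrite k_gt0 (leq_ltn_trans k_le) // subn1.
- by apply: (perm_val _ id (@inj_id _)) => j k; rewrite joint_prob_Z.
- by apply: (perm_val _ -%R (@oppr_inj _)) => j k; rewrite joint_prob_X.
Qed.
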